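(* Let $r\ge 2$, let $P_1,\dots,P_r$ be nonempty point sets in $\mathbb{R}^d$, let $D=\max_{i\in[r]}\operatorname{diam}P_i$, and let $t\in[r-1]$. Let $a\in\mathbb{R}^d$ and assume that for all distinct $i_1,\dots,i_t\in[r]$ we have $a\in\operatorname{conv}(P_{i_1}\cup\dots\cup P_{i_t})$. Then there exists a transversal $T=\{p_1,\dots,p_r\}$ (with $p_i\in P_i$ for all $i$) such that \[ d(a,\operatorname{conv}T)\le \beta\cdot\frac{D}{\sqrt{r-t+1}},\qquad \beta=4\sqrt{\frac{\ln 4}{3}}. \]
   Context: $d(a,S)$ denotes Euclidean distance from a point to a set; $\operatorname{diam}$ is Euclidean diameter; $[m]=\{1,\dots,m\}$. *)

From HB Require Import structures.
From mathcomp Require Import all_boot all_order all_algebra.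
From mathcomp Require Import all_classical all_reals all_analysis.
Set Implicit Arguments. Unset Strict Implicit. Unset Printing Implicit Defensive.
Import Order.TTheory GRing.Theory Num.Theory.
Local Open Scope ring_scope.
Local Open Scope classical_set_scope.

Section Defs.
Variables (R : realType) (d : nat).
Notation pt := 'rV[R]_d.

(* Euclidean norm on R^d (the library norm on matrices is the max norm). *)
Definition enorm (v : pt) : R := Num.sqrt (\sum_(k < d) (v ord0 k) ^+ 2).

Definition conv_hull (s : seq pt) : set pt :=
  [set x | exists lam : 'I_(size s) -> R,
     (forall j, 0 <= lam j) /\ \sum_j lam j = 1 /\
     x = \sum_j lam j *: s`_j].

Definition dist_set (a : pt) (A : set pt) : R :=
  inf [set enorm (a - x) | x in A].

Definition diam (s : seq pt) : R :=
  \big[Num.max/0]_(x <- s) \big[Num.max/0]_(y <- s) enorm (x - y).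

End Defs.

(* Write a = sum_i sum_j mu_ij p_ij, where p_ij is the j-th point of P_i, mu >= 0 and
   sum mu = 1, and call lambda_i = sum_j mu_ij the mass of class i.  Adding up m = r - t + 1
   such representations, each supported on t classes of currently smallest mass, and
   dividing by m gives one with sum_i lambda_i^2 <= 2/m.  Picking p_i in P_i at random with
   law mu_i. / lambda_i, the point sum_i lambda_i p_i of conv T lies at expected squared
   distance at most D^2 sum_i lambda_i^2 from a, by the weighted variance identity; the
   choice is derandomized one class at a time.  Hence d(a, conv T) <= D sqrt(2/m), which is
   below beta D / sqrt m since ln 4 >= 3/4. *)

From HB Require Import structures.
From mathcomp Require Import all_boot all_order all_algebra.
From mathcomp Require Import all_classical all_reals all_analysis.
From mathcomp Require Import ring lra zify.
Set Implicit Arguments.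
Unset Strict Implicit.
Unset Printing Implicit Defensive.
Import Order.TTheory GRing.Theory Num.Theory.
Local Open Scope ring_scope.
Local Open Scope classical_set_scope.

Lemma exists_subset_card (T : finType) (A : {set T}) k : (k <= #|A|)%N ->
  exists2 S : {set T}, S \subset A & #|S| = k.
Proof.
move=> k_le; exists [set x in take k (enum A)].
  by apply/fintype.subsetP => x; rewrite inE => /mem_take; rewrite mem_enum.
rewrite cardsE; move/card_uniqP: (take_uniq k (enum_uniq (mem A))) => ->.
by rewrite size_takel // -cardE.
Qed.

Section WeightedMean.
Variable R : realFieldType.

Lemma wsum_sqr_deviation n (mu X : 'I_n -> R) (u : R) :
  \sum_j mu j * (u + ((\sum_l mu l) * X j - \sum_l mu l * X l)) ^+ 2 =
  (\sum_j mu j) * u ^+ 2 +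
  (\sum_j mu j) / 2 * \sum_j \sum_l mu j * mu l * (X j - X l) ^+ 2.
Proof.
set A := \sum_j mu j; set B := \sum_j mu j * X j; set C := \sum_j mu j * X j ^+ 2.
have -> : \sum_j mu j * (u + (A * X j - B)) ^+ 2 =
    (u - B) ^+ 2 * A + 2 * (u - B) * A * B + A ^+ 2 * C.
  transitivity (\sum_j ((u - B) ^+ 2 * mu j + 2 * (u - B) * A * (mu j * X j)
                        + A ^+ 2 * (mu j * X j ^+ 2))).
    by apply: eq_bigr => j _; ring.
  by rewrite !big_split -!mulr_sumr.
have -> : \sum_j \sum_l mu j * mu l * (X j - X l) ^+ 2 = 2 * (A * C) - 2 * B ^+ 2.
  transitivity (\sum_j (mu j * X j ^+ 2 * A - 2 * (mu j * X j) * B + mu j * C)).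
    apply: eq_bigr => j _; rewrite /A /B /C !mulr_sumr -sumrN -!big_split /=.
    by apply: eq_bigr => l _; ring.
  by rewrite !big_split /= sumrN -!mulr_suml -mulr_sumr -/A -/B -/C; ring.
by field.
Qed.

Lemma exists_le_wmean (I : finType) (mu f : I -> R) (B : R) :
    (forall i, 0 <= mu i) -> 0 < \sum_i mu i ->
    \sum_i mu i * f i <= (\sum_i mu i) * B ->
  exists i, f i <= B.
Proof.
move=> mu_ge0 mu_gt0 mean_le; apply: contrapT => /forallNP f_nle.
have f_gt i : B < f i by rewrite ltNge; apply/negP.
have [i0 mu_i0] : exists i, 0 < mu i.
  apply/existsP; apply: contraLR mu_gt0; rewrite negb_exists => /forallP mu_le0.
  by rewrite -leNgt; apply: sumr_le0 => i _; rewrite leNgt.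
suff : (\sum_i mu i) * B < \sum_i mu i * f i by rewrite ltNge mean_le.
rewrite mulr_suml (bigD1 i0) // [X in _ < X](bigD1 i0) //=.
rewrite ltr_leD ?ltr_pM2l //.
by apply: ler_sum => i _; rewrite ler_wpM2l // ltW.
Qed.

Lemma card_gt_lt_of_sum_le (I : finType) (f : I -> R) (c : R) m :
    (0 < m)%N -> (forall i, 0 <= f i) -> \sum_i f i <= m%:R * c ->
  (#|[set i | (c < f i)%R]%SET| < m)%N.
Proof.
move=> m_gt0 f_ge0 sum_le; rewrite ltnNge; apply/negP => m_le.
set B := [set i | (c < f i)%R]%SET in m_le.
have c_ge0 : 0 <= c.
  rewrite -(@pmulr_rge0 _ m%:R) ?ltr0n //; apply: le_trans sum_le.
  exact: sumr_ge0.
have [i0 i0B] : exists i, i \in B by apply/card_gt0P; apply: leq_trans m_le.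
suff : m%:R * c < m%:R * c by rewrite ltxx.
apply: le_lt_trans (_ : m%:R * c <= #|B|%:R * c) _; first by rewrite ler_wpM2r ?ler_nat.
apply: lt_le_trans sum_le; rewrite mulr_natl -sumr_const.
apply: lt_le_trans (_ : \sum_(i in B) f i <= _).
  by apply: ltr_sum => [|i]; [apply/hasP; exists i0; rewrite ?mem_index_enum | rewrite inE].
by rewrite [X in _ <= X](bigID (mem B)) lerDl sumr_ge0.
Qed.

End WeightedMean.

Section SquaredNorm.
Variables (R : realFieldType) (d : nat).
Implicit Types (u v : 'rV[R]_d).

Definition sqnorm v : R := \sum_(k < d) v ord0 k ^+ 2.

Lemma sqnorm_ge0 v : 0 <= sqnorm v.
Proof. by apply: sumr_ge0 => k _; apply: sqr_ge0. Qed.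

Lemma sqnormN v : sqnorm (- v) = sqnorm v.
Proof. by apply: eq_bigr => k _; rewrite mxE sqrrN. Qed.

Lemma sqnorm0 : sqnorm 0 = 0.
Proof. by apply: big1 => k _; rewrite mxE expr0n. Qed.

Lemma wsum_sqnorm_deviation n (mu : 'I_n -> R) (x : 'I_n -> 'rV[R]_d) u :
  \sum_j mu j * sqnorm (u + ((\sum_l mu l) *: x j - \sum_l mu l *: x l)) =
  (\sum_j mu j) * sqnorm u +
  (\sum_j mu j) / 2 * \sum_j \sum_l mu j * mu l * sqnorm (x j - x l).
Proof.
transitivity (\sum_k ((\sum_j mu j) * u ord0 k ^+ 2 + (\sum_j mu j) / 2 *
    \sum_j \sum_l mu j * mu l * (x j ord0 k - x l ord0 k) ^+ 2)).
  rewrite /sqnorm; under eq_bigr do rewrite mulr_sumr.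
  rewrite exchange_big; apply: eq_bigr => k _.
  rewrite -(wsum_sqr_deviation mu (fun j => x j ord0 k)); apply: eq_bigr => j _.
  rewrite !mxE summxE; congr (_ * (_ + (_ - _)) ^+ 2).
  by apply: eq_bigr => l _; rewrite mxE.
rewrite big_split -mulr_sumr -mulr_sumr; congr (_ + _ * _).
rewrite exchange_big; apply: eq_bigr => j _; rewrite exchange_big.
by apply: eq_bigr => l _; rewrite mulr_sumr; apply: eq_bigr => k _; rewrite !mxE.
Qed.

Lemma exists_deviation_le n (mu : 'I_n -> R) (x : 'I_n -> 'rV[R]_d) (D2 : R) u :
    (0 < n)%N -> (forall j, 0 <= mu j) -> (forall j l, sqnorm (x j - x l) <= D2) ->
  exists j, sqnorm (u + ((\sum_l mu l) *: x j - \sum_l mu l *: x l))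
            <= sqnorm u + D2 * (\sum_l mu l) ^+ 2.
Proof.
move=> n_gt0 mu_ge0 x_close; set w := \sum_l mu l.
have : 0 <= w by apply: sumr_ge0.
rewrite le_eqVlt => /orP[/eqP w0 | w_gt0].
  have mu0 := psumr_eq0P (fun j _ => mu_ge0 j) (esym w0).
  exists (Ordinal n_gt0); rewrite -w0 scale0r sub0r big1 => [|l _]; last first.
    by rewrite mu0 ?scale0r.
  by rewrite oppr0 !addr0 expr0n mulr0 addr0.
apply: exists_le_wmean => //; rewrite wsum_sqnorm_deviation -/w mulrDr lerD2l.
have D2_ge0 : 0 <= D2.
  by have := x_close (Ordinal n_gt0) (Ordinal n_gt0); rewrite subrr sqnorm0.
have pairs_le : \sum_j \sum_l mu j * mu l * sqnorm (x j - x l) <= w ^+ 2 * D2.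
  have -> : w ^+ 2 * D2 = \sum_j \sum_l mu j * mu l * D2.
    rewrite expr2 /w !mulr_suml; apply: eq_bigr => j _.
    by rewrite mulr_sumr mulr_suml.
  by do 2 (apply: ler_sum => ? _); rewrite ler_wpM2l ?mulr_ge0.
have wD2_ge0 : 0 <= w * (w ^+ 2 * D2) by rewrite !mulr_ge0 ?sqr_ge0 // ltW.
apply: le_trans (_ : w / 2 * (w ^+ 2 * D2) <= _).
  by rewrite ler_wpM2l // divr_ge0 // ltW.
rewrite [D2 * _]mulrC; lra.
Qed.

End SquaredNorm.

Section Weightings.
Variables (R : realFieldType) (d : nat) (I : finType) (P : I -> seq 'rV[R]_d).
Implicit Types (M N : I -> nat -> R).

(* A weighting [M] puts weight [M i j] on the [j]-th point of [P i]. *)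
Definition mass M i := \sum_(j < size (P i)) M i j.

Definition moment M := \sum_i \sum_(j < size (P i)) M i j *: (P i)`_j.

Lemma mass_ge0 M : (forall i j, 0 <= M i j) -> forall i, 0 <= mass M i.
Proof. by move=> M_ge0 i; apply: sumr_ge0. Qed.

Lemma massD M N i : mass (fun i j => M i j + N i j) i = mass M i + mass N i.
Proof. exact: big_split. Qed.

Lemma momentD M N : moment (fun i j => M i j + N i j) = moment M + moment N.
Proof.
rewrite /moment -big_split; apply: eq_bigr => i _.
by rewrite -big_split; apply: eq_bigr => j _; rewrite scalerDl.
Qed.

Lemma mass_div M c i : mass (fun i j => M i j / c) i = mass M i / c.
Proof. by rewrite /mass mulr_suml. Qed.

Lemma moment_div M c : moment (fun i j => M i j / c) = c^-1 *: moment M.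
Proof.
rewrite /moment scaler_sumr; apply: eq_bigr => i _.
by rewrite scaler_sumr; apply: eq_bigr => j _; rewrite scalerA mulrC.
Qed.

Lemma mass0 i : mass (fun _ _ => 0) i = 0.
Proof. exact: big1. Qed.

Lemma moment0 : moment (fun _ _ => 0) = 0.
Proof. by apply: big1 => i _; apply: big1 => j _; rewrite scale0r. Qed.

Definition single (i0 : I) (c : nat -> R) i (j : nat) := if i == i0 then c j else 0.

Lemma sum_mass_single i0 c : \sum_i mass (single i0 c) i = \sum_(j < size (P i0)) c j.
Proof.
rewrite (eq_bigr (fun i => if i == i0 then \sum_(j < size (P i)) c j else 0)).
  by rewrite -big_mkcond big_pred1_eq.
by move=> i _; rewrite /mass /single; case: eqP => // _; rewrite big1.
Qed.

Lemma moment_single i0 c : moment (single i0 c) = \sum_(j < size (P i0)) c j *: (P i0)`_j.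
Proof.
rewrite /moment (eq_bigr (fun i =>
  if i == i0 then \sum_(j < size (P i)) c j *: (P i)`_j else 0)).
  by rewrite -big_mkcond big_pred1_eq.
move=> i _; rewrite /single; case: eqP => // _.
by apply: big1 => j _; rewrite scale0r.
Qed.

Lemma flatten_weights (l : seq I) (c : nat -> R) : (forall j, 0 <= c j) ->
  let F := flatten [seq P i | i <- l] in
  exists M, (forall i j, 0 <= M i j) /\ (forall i, i \notin l -> forall j, M i j = 0) /\
            \sum_i mass M i = \sum_(j < size F) c j /\
            moment M = \sum_(j < size F) c j *: F`_j.
Proof.
elim: l c => [|i0 l IHl] c c_ge0 /=.
  exists (fun _ _ => 0); rewrite moment0 !big_ord0 big1 // => i _; exact: mass0.
have [M [M_ge0 [M_supp [M_mass M_moment]]]] := IHl _ (fun j => c_ge0 (size (P i0) + j)%N).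
exists (fun i j => M i j + single i0 c i j); split.
  by move=> i j; rewrite addr_ge0 // /single; case: eqP.
split.
  move=> i; rewrite in_cons negb_or => /andP[/negbTE i_neq i_notin] j.
  by rewrite M_supp // /single i_neq addr0.
rewrite momentD moment_single M_moment size_cat !big_split_ord /=.
under eq_bigr do rewrite massD.
rewrite big_split /= sum_mass_single M_mass addrC; split=> //.
rewrite addrC; congr (_ + _); apply: eq_bigr => j _; rewrite nth_cat.
  by rewrite ltnNge leq_addr /= addKn.
by rewrite ltn_ord.
Qed.

Section Derandomization.
Variables (M : I -> nat -> R) (D2 : R).
Hypothesis M_ge0 : forall i j, 0 <= M i j.
Hypothesis P_neq0 : forall i, P i != [::].
Hypothesis P_close : forall i x y, x \in P i -> y \in P i -> sqnorm (x - y) <= D2.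

(* Classes are fixed one at a time; the classes already fixed contribute the [u] of
   [exists_deviation_le]. *)
Lemma exists_transversal_near_moment_seq (l : seq I) : uniq l ->
  exists2 p : I -> 'rV_d, (forall i, p i \in P i) &
    sqnorm (\sum_(i <- l) (mass M i *: p i - \sum_(j < size (P i)) M i j *: (P i)`_j))
      <= D2 * \sum_(i <- l) mass M i ^+ 2.
Proof.
have P_gt0 i : (0 < size (P i))%N by rewrite lt0n size_eq0.
elim: l => [_|i0 l IHl /= /andP[i0_notin_l l_uniq]].
  exists (fun i => (P i)`_0) => [i|]; first exact: mem_nth.
  by rewrite !big_nil sqnorm0 mulr0.
have [p p_in p_near] := IHl l_uniq.
have [j j_near] := exists_deviation_le
  (\sum_(i <- l) (mass M i *: p i - \sum_(j < size (P i)) M i j *: (P i)`_j))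
  (P_gt0 i0) (M_ge0 i0) (fun j l => P_close (mem_nth 0 (ltn_ord j)) (mem_nth 0 (ltn_ord l))).
exists (fun i => if i == i0 then (P i0)`_j else p i) => [i|].
  by case: eqP => [->|]; [exact: mem_nth | rewrite p_in].
rewrite !big_cons eqxx (eq_big_seq (fun i =>
  mass M i *: p i - \sum_(j < size (P i)) M i j *: (P i)`_j)); last first.
  by move=> i i_in_l; case: eqP => // i_eq; rewrite -i_eq i_in_l in i0_notin_l.
rewrite [X in sqnorm X]addrC mulrDr [X in _ <= X]addrC; apply: le_trans j_near _.
by rewrite lerD2r.
Qed.

Lemma exists_transversal_near_moment :
  exists2 p : I -> 'rV_d, (forall i, p i \in P i) &
    sqnorm (\sum_i mass M i *: p i - moment M) <= D2 * \sum_i mass M i ^+ 2.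
Proof.
have [p p_in p_near] := exists_transversal_near_moment_seq (index_enum_uniq I).
by exists p; rewrite // /moment -sumrB.
Qed.

End Derandomization.
End Weightings.

Section BalancedWeights.
Variables (R : realFieldType) (d : nat) (I : finType) (P : I -> seq 'rV[R]_d).
Variables (t : nat) (a : 'rV[R]_d).
Hypothesis t_le : (t <= #|I|)%N.
Hypothesis represent : forall S : {set I}, #|S| = t ->
  exists M, (forall i j, 0 <= M i j) /\ (forall i, i \notin S -> forall j, M i j = 0) /\
            \sum_i mass P M i = 1 /\ moment P M = a.
Let m := (#|I| - t).+1.

(* Step [k + 1] adds a representation of [a] supported on [t] classes of mass at most
   [k / m]; they exist because fewer than [m] classes can exceed the average [k / m]. *)
Lemma greedy_weights k :
  exists M, (forall i j, 0 <= M i j) /\ \sum_i mass P M i = k%:R /\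
            moment P M = k%:R *: a /\
            \sum_i mass P M i ^+ 2 <= k%:R ^+ 2 / m%:R + k%:R.
Proof.
have m_gt0 : 0 < m%:R :> R by rewrite ltr0n.
elim: k => [|k [M [M_ge0 [M_mass [M_moment M_sqr]]]]].
  exists (fun _ _ => 0); rewrite moment0 scale0r !big1 => [|i _|i _]; rewrite ?mass0 //.
  by rewrite expr0n.
set light := [set i | (mass P M i <= k%:R / m%:R)%R]%SET.
have t_le_light : (t <= #|light|)%N.
  have heavy_lt :=
    @card_gt_lt_of_sum_le _ _ (mass P M) (k%:R / m%:R) m isT (mass_ge0 P M_ge0).
  have {heavy_lt} : (#|~: light| < m)%N.
    rewrite (eq_card (B := [set i | (k%:R / m%:R < mass P M i)%R]%SET)) => [|i].
      by apply: heavy_lt; rewrite M_mass mulrC divfK ?gt_eqF.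
    by rewrite !inE ltNge.
  by have := cardsC light; rewrite /m; lia.
have [S S_light S_card] := exists_subset_card t_le_light.
have [N [N_ge0 [N_supp [N_mass N_moment]]]] := represent S_card.
exists (fun i j => M i j + N i j); split; first by move=> i j; apply: addr_ge0.
split; first by under eq_bigr do rewrite massD; rewrite big_split /= M_mass N_mass natr1.
split; first by rewrite momentD M_moment N_moment -natr1 scalerDl scale1r.
have cross : \sum_i mass P M i * mass P N i <= k%:R / m%:R.
  apply: le_trans (_ : \sum_i k%:R / m%:R * mass P N i <= _); last first.
    by rewrite -mulr_sumr N_mass mulr1.
  apply: ler_sum => i _; have [iS|iNS] := boolP (i \in S).
    rewrite ler_wpM2r ?(mass_ge0 P N_ge0) //.
    by move/(fintype.subsetP S_light): iS; rewrite inE.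
  have -> : mass P N i = 0 by apply: big1 => j _; rewrite N_supp.
  by rewrite !mulr0.
have N_sqr : \sum_i mass P N i ^+ 2 <= 1.
  rewrite -N_mass; apply: ler_sum => i _.
  rewrite expr2 -[leRHS]mulr1 ler_wpM2l ?(mass_ge0 P N_ge0) //.
  rewrite -N_mass (bigD1 i) //= lerDl.
  by apply: sumr_ge0 => ? _; apply: mass_ge0.
under eq_bigr do rewrite massD sqrrD.
rewrite !big_split /=.
have m_inv_ge0 : 0 <= m%:R^-1 :> R by rewrite invr_ge0 ltW.
have -> : k.+1%:R ^+ 2 / m%:R + k.+1%:R =
    k%:R ^+ 2 / m%:R + k%:R + (k%:R / m%:R + k%:R / m%:R) + (1 + m%:R^-1) :> R.
  by rewrite -natr1; field; rewrite gt_eqF.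
lra.
Qed.

Lemma balanced_weights :
  exists M, (forall i j, 0 <= M i j) /\ \sum_i mass P M i = 1 /\
            moment P M = a /\ \sum_i mass P M i ^+ 2 <= 2 / m%:R.
Proof.
have m_gt0 : 0 < m%:R :> R by rewrite ltr0n.
have [M [M_ge0 [M_mass [M_moment M_sqr]]]] := greedy_weights m.
exists (fun i j => M i j / m%:R); split; first by move=> i j; rewrite divr_ge0 // ltW.
split.
  by under eq_bigr do rewrite mass_div; rewrite -mulr_suml M_mass divff ?gt_eqF.
split; first by rewrite moment_div M_moment scalerA mulVf ?scale1r // gt_eqF.
under eq_bigr do rewrite mass_div expr_div_n.
rewrite -mulr_suml ler_pdivrMr ?exprn_gt0 //; apply: le_trans M_sqr _.
by rewrite le_eqVlt; apply/orP; left; apply/eqP; field; rewrite gt_eqF.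
Qed.

End BalancedWeights.

Section Euclidean.
Variables (R : realType) (d : nat).
Local Notation pt := 'rV[R]_d.

Lemma enorm_sqr (v : pt) : enorm v ^+ 2 = sqnorm v.
Proof. exact/sqr_sqrtr/sqnorm_ge0. Qed.

Lemma enorm_le (v : pt) T : 0 <= T -> sqnorm v <= T ^+ 2 -> enorm v <= T.
Proof.
by move=> T_ge0 v_le; rewrite -[leRHS](ger0_norm T_ge0) -sqrtr_sqr ler_sqrt ?sqr_ge0.
Qed.

Lemma dist_set_le (a z : pt) (A : set pt) : A z -> dist_set a A <= enorm (a - z).
Proof.
move=> Az; apply: ge_inf; last by exists z.
by exists 0 => _ [x _ <-]; apply: sqrtr_ge0.
Qed.

Lemma enorm_le_diam (s : seq pt) x y : x \in s -> y \in s -> enorm (x - y) <= diam s.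
Proof.
move=> xs ys; apply: le_trans (le_bigmax_seq _ _ _ _ xs isT).
exact: (le_bigmax_seq _ _ _ (fun y => enorm (x - y)) ys isT).
Qed.

(* Weights indexed by [nat] rather than ['I_(size s)], so that they can be reindexed
   along [flatten]. *)
Lemma conv_hull_nat (s : seq pt) z : conv_hull s z <->
  exists2 c : nat -> R, (forall j, 0 <= c j) &
    \sum_(j < size s) c j = 1 /\ z = \sum_(j < size s) c j *: s`_j.
Proof.
split=> [[lam [lam_ge0 [lam_sum ->]]] | [c c_ge0 [c_sum ->]]]; last by exists (fun j => c j).
pose c j := if insub j is Some k then lam k else 0.
have cE (k : 'I_(size s)) : c k = lam k by rewrite /c valK.
exists c => [j|]; first by rewrite /c; case: insub.
by split; [rewrite -lam_sum | ]; apply: eq_bigr => k _; rewrite cE.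
Qed.

Lemma conv_hull_flatten_weights (I : finType) (P : I -> seq pt) (S : {set I}) z :
    conv_hull (flatten [seq P i | i in S]) z ->
  exists M, (forall i j, 0 <= M i j) /\ (forall i, i \notin S -> forall j, M i j = 0) /\
            \sum_i mass P M i = 1 /\ moment P M = z.
Proof.
case/conv_hull_nat => c c_ge0 [c_sum ->].
have [M [M_ge0 [M_supp [M_mass M_moment]]]] := flatten_weights P (enum S) c_ge0.
exists M; split=> //; split; last by rewrite M_mass c_sum.
by move=> i; rewrite -mem_enum; apply: M_supp.
Qed.

Lemma conv_hull_wsum n (p : 'I_n -> pt) (lam : 'I_n -> R) :
    (forall i, 0 <= lam i) -> \sum_i lam i = 1 ->
  conv_hull [seq p i | i : 'I_n] (\sum_i lam i *: p i).
Proof.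
move=> lam_ge0 lam_sum; apply/conv_hull_nat.
have size_s : size [seq p i | i : 'I_n] = n by rewrite size_map size_enum_ord.
pose c j := if insub j is Some i then lam i else 0.
have cE (i : 'I_n) : c i = lam i by rewrite /c valK.
exists c => [j|]; first by rewrite /c; case: insub.
rewrite size_s; split; first by rewrite -lam_sum; apply: eq_bigr => i _; rewrite cE.
by apply: eq_bigr => i _; rewrite cE (nth_map i) ?size_enum_ord ?nth_ord_enum.
Qed.

End Euclidean.

Lemma three_quarters_le_ln4 (R : realType) : 3 / 4 <= ln (4 : R).
Proof.
have := expR_ge1Dx (- ln (4 : R)).
by rewrite expRN lnK ?posrE // -[4^-1]div1r; lra.
Qed.

Lemma sqrt2_bound_le_beta_bound (R : realType) (D m : R) : 0 < m ->
  D ^+ 2 * (2 / m) <= (4 * Num.sqrt (ln 4 / 3) * D / Num.sqrt m) ^+ 2.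
Proof.
move=> m_gt0; have ln4_ge := three_quarters_le_ln4 R.
have ln4_3_ge0 : 0 <= ln (4 : R) / 3 by lra.
rewrite !exprMn exprVn (sqr_sqrtr (ltW m_gt0)) (sqr_sqrtr ln4_3_ge0).
have D2m_ge0 : 0 <= D ^+ 2 / m by rewrite divr_ge0 ?sqr_ge0 // ltW.
by rewrite mulrCA -[X in _ <= X]mulrA ler_wpM2r //; lra.
Qed.

Theorem theorem2p2 (R : realType) (d r t : nat) (P : 'I_r -> seq 'rV[R]_d)
    (a : 'rV[R]_d) :
  (2 <= r)%N ->
  (forall i, P i != [::]) ->
  (1 <= t <= r.-1)%N ->
  (forall S : {set 'I_r}, #|S| = t ->
     conv_hull (flatten [seq P i | i in S]) a) ->
  exists p : 'I_r -> 'rV[R]_d,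
    (forall i, p i \in P i) /\
    dist_set a (conv_hull [seq p i | i : 'I_r])
      <= 4 * Num.sqrt (ln 4 / 3) *
         (\big[Num.max/0]_(i < r) diam (P i)) / Num.sqrt ((r - t).+1)%:R.
Proof.
move=> _ P_neq0 /andP[_ t_le] a_in_hulls.
set D := \big[Num.max/0]_(i < r) diam (P i).
have t_le_r : (t <= #|'I_r|)%N by rewrite card_ord (leq_trans t_le) ?leq_pred.
have [M [M_ge0 [M_mass [M_moment M_sqr]]]] := balanced_weights t_le_r
  (fun S S_card => conv_hull_flatten_weights (a_in_hulls S S_card)).
rewrite card_ord in M_sqr.
have P_close i x y : x \in P i -> y \in P i -> sqnorm (x - y) <= D ^+ 2.
  move=> xP yP; rewrite -enorm_sqr ler_sqr ?nnegrE ?sqrtr_ge0 ?bigmax_ge_id //.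
  exact: le_trans (enorm_le_diam xP yP) (le_bigmax _ _ i).
have [p p_in p_near] := exists_transversal_near_moment M_ge0 P_neq0 P_close.
exists p; split=> //.
apply: le_trans (dist_set_le a (conv_hull_wsum p (mass_ge0 P M_ge0) M_mass)) _.
apply: enorm_le.
  by rewrite divr_ge0 ?sqrtr_ge0 // !mulr_ge0 ?sqrtr_ge0 ?bigmax_ge_id.
rewrite -sqnormN opprB -M_moment.
apply: le_trans p_near (le_trans _ (sqrt2_bound_le_beta_bound D _)).
  by rewrite ler_wpM2l ?sqr_ge0.
by rewrite ltr0n.
Qed.
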